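(* Let $A=(a_{ij})\in\mathbb{R}^{n\times n}$ ($n\ge2$) be pseudo-diagonalizable and suppose there exists $k\in[n]$ such that $a_{kk}\ge0$ and $a_{ii}\le0$ for all $i\ne k$. Then $\lambda(A)=a_{kk}$ and $V(A)=\{\alpha\otimes A_k:\alpha\in\overline{\mathbb{R}}\}$, where $A_k$ is the $k$-th column of $A$.
   Context: Max-plus conventions: $\overline{\mathbb{R}}=\mathbb{R}\cup\{-\infty\}$, $\varepsilon=-\infty$, $\oplus=\max$, $\otimes=+$; $(A\otimes x)_i=\max_j(A_{ij}+x_j)$, $(\alpha\otimes x)_i=\alpha+x_i$. A matrix $P$ is invertible iff it has exactly one real entry in each row and column (others $\varepsilon$); $A,B$ are similar if $B=P^{-1}\otimes A\otimes P$ for invertible $P$. Pseudo-diagonal: real diagonal entries, off-diagonal entries equal to real $0$; pseudo-diagonalizable: similar to a pseudo-diagonal matrix. For finite $A$, $\lambda(A)$ is the maximum cycle mean $\max\{(a_{i_1i_2}+\dots+a_{i_{m-1}i_m}+a_{i_mi_1})/m\}$ over $m\ge1$ and distinct $i_1,\dots,i_m\in[n]$, which is the unique max-plus eigenvalue of $A$; $V(A)=\{x\in\overline{\mathbb{R}}^n: A\otimes x=\lambda(A)\otimes x\}$ is the eigenspace (containing the all-$\varepsilon$ vector). *)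

(* Max-plus algebra over R-bar = option R (None = epsilon = -oo). *)
From mathcomp Require Import all_boot all_order all_algebra.
From mathcomp Require Import reals.
Set Implicit Arguments. Unset Strict Implicit. Unset Printing Implicit Defensive.
Import Order.TTheory GRing.Theory Num.Theory.
Local Open Scope ring_scope.

Section MaxPlus.
Variable R : realType.

Definition mp_oplus (a b : option R) : option R :=
  match a, b with
  | None, y => y
  | x, None => x
  | Some x, Some y => Some (Num.max x y)
  end.

Definition mp_otimes (a b : option R) : option R :=
  match a, b with
  | Some x, Some y => Some (x + y)
  | _, _ => None
  end.

Definition mp_mulmv n (A : 'M[option R]_n) (x : 'I_n -> option R) : 'I_n -> option R :=
  fun i => \big[mp_oplus/None]_(j < n) mp_otimes (A i j) (x j).

Definition mp_scale n (a : option R) (x : 'I_n -> option R) : 'I_n -> option R :=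
  fun i => mp_otimes a (x i).

Definition mp_mulmx n (A B : 'M[option R]_n) : 'M[option R]_n :=
  \matrix_(i, j) \big[mp_oplus/None]_(l < n) mp_otimes (A i l) (B l j).

Definition mp_id n : 'M[option R]_n :=
  \matrix_(i, j) (if i == j then Some 0 else None).

Definition mp_of n (A : 'M[R]_n) : 'M[option R]_n := map_mx Some A.

Definition mp_similar n (A B : 'M[option R]_n) : Prop :=
  exists P Q : 'M[option R]_n,
    mp_mulmx Q P = mp_id n /\ mp_mulmx P Q = mp_id n /\
    B = mp_mulmx (mp_mulmx Q A) P.

(* pseudo-diagonal: real diagonal entries, off-diagonal entries real 0 *)
Definition pseudo_diagonal n (D : 'M[R]_n) : Prop :=
  forall i j : 'I_n, i != j -> D i j = 0.

Definition pseudo_diagonalizable n (A : 'M[R]_n) : Prop :=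
  exists D : 'M[R]_n, pseudo_diagonal D /\ mp_similar (mp_of A) (mp_of D).

(* mean of the cycle (i_1 ... i_m): (a_{i1 i2} + ... + a_{im i1}) / m *)
Definition cycle_mean n (A : 'M[R]_n) (s : seq 'I_n) : R :=
  (\sum_(p <- zip s (rot 1 s)) A p.1 p.2) / (size s)%:R.

Definition cycle_means n (A : 'M[R]_n) : seq R :=
  flatten [seq [seq cycle_mean A (tval t) | t <- [seq t <- enum {: m.-tuple 'I_n} | uniq (tval t)]]
          | m <- iota 1 n].

(* maximum cycle mean (the list is nonempty as soon as n >= 1) *)
Definition mp_lambda n (A : 'M[R]_n) : R :=
  foldr Num.max (head 0 (cycle_means A)) (cycle_means A).

End MaxPlus.

Definition mp_in_eigenspace (R : realType) n (A : 'M[R]_n) (x : 'I_n -> option R) : Prop :=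
  mp_mulmv (mp_of A) x = mp_scale (Some (mp_lambda A)) x.

From HB Require Import structures.
From mathcomp Require Import all_boot all_order all_algebra.
From mathcomp Require Import reals.
From mathcomp Require Import lra.
From Stdlib Require Import FunctionalExtensionality.
Import Order.TTheory GRing.Theory Num.Theory.
Local Open Scope ring_scope.
Set Implicit Arguments. Unset Strict Implicit. Unset Printing Implicit Defensive.

(* A max-plus invertible matrix is a permutation matrix with real entries, so
   conjugating A to a pseudo-diagonal matrix forces a_ij = c_i - c_j for i <> j.
   The potentials c telescope along every cycle, hence every cycle mean is at
   most max_i a_ii = a_kk, attained by the loop at k.  An eigenvector of a
   finite matrix is either all-epsilon or finite; writing y = x - c, the
   eigen-equations give y_j <= a_kk + y_i for i <> j.  When a_kk > 0 the maximum
   in each row j <> k is attained off the diagonal, so some y_l equals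
   a_kk + y_j; this forces y to peak at k and then y_i = y_k - a_kk for i <> k,
   i.e. x is a max-plus multiple of the k-th column. *)

Section MaxPlusSum.
Variable R : realType.

Lemma mp_oplusA : associative (@mp_oplus R).
Proof. by case=> [x|] [y|] [z|] //=; rewrite maxA. Qed.

Lemma mp_oplusC : commutative (@mp_oplus R).
Proof. by case=> [x|] [y|] //=; rewrite maxC. Qed.

Lemma mp_oplus0l : left_id None (@mp_oplus R).
Proof. by case. Qed.

HB.instance Definition _ :=
  Monoid.isComLaw.Build (option R) None (@mp_oplus R) mp_oplusA mp_oplusC mp_oplus0l.

Definition mp_le (a b : option R) : Prop :=
  match a, b with
  | None, _ => True
  | Some x, Some y => x <= y
  | Some _, None => False
  end.

Lemma mp_le_anti (a b : option R) : mp_le a b -> mp_le b a -> a = b.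
Proof. by case: a => [x|]; case: b => [y|] //= *; congr Some; apply/le_anti/andP. Qed.

Lemma mp_otimesr_eps (a : option R) : mp_otimes a None = None.
Proof. by case: a. Qed.

Lemma bigmp_ub n (F : 'I_n -> option R) j :
  mp_le (F j) (\big[@mp_oplus R/None]_(j < n) F j).
Proof.
rewrite (bigD1 j) //=; case: (F j) => [x|] //=.
by case: (\big[_/_]_(_ | _) _) => [y|] //=; rewrite le_max lexx.
Qed.

Lemma bigmp_attained n (F : 'I_n -> option R) :
  \big[@mp_oplus R/None]_(j < n) F j = None \/
  exists j, \big[@mp_oplus R/None]_(j < n) F j = F j.
Proof.
elim/big_rec: _ => [|i x _ [->|[j ->]]]; first by left.
- by right; exists i; case: (F i).
- right; case Ei: (F i) => [u|]; case Ej: (F j) => [v|] /=;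
    try by [exists i; rewrite Ei | exists j; rewrite Ej].
  by rewrite /Order.max; case: ifP => _; [exists j|exists i]; rewrite ?Ei ?Ej.
Qed.

Lemma bigmp_eqP n (F : 'I_n -> option R) y :
  \big[@mp_oplus R/None]_(j < n) F j = y <->
  (forall j, mp_le (F j) y) /\ (y = None \/ exists j, F j = y).
Proof.
split=> [<-|[ub att]].
  split=> [j|]; first exact: bigmp_ub.
  by case: (bigmp_attained F) => [->|[j ->]]; [left|right; exists j].
apply: mp_le_anti.
  by case: (bigmp_attained F) => [->|[j ->]].
by case: att => [->|[j <-]] //; exact: bigmp_ub.
Qed.

Lemma bigmp_only n (F : 'I_n -> option R) j0 :
  (forall j, j != j0 -> F j = None) -> \big[@mp_oplus R/None]_(j < n) F j = F j0.
Proof. by move=> F0; rewrite (bigD1 j0) //= big1 //; case: (F j0). Qed.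

End MaxPlusSum.

Section Similarity.
Variables (R : realType) (n : nat).

Lemma mp_mulmx_id_monomial (P Q : 'M[option R]_n) : mp_mulmx P Q = mp_id R n ->
  exists (s : 'I_n -> 'I_n) (p : 'I_n -> R),
    [/\ forall a, P a (s a) = Some (p a), forall a, Q (s a) a = Some (- p a)
      & forall a b l, a != b -> mp_otimes (P a l) (Q l b) = None].
Proof.
move/matrixP=> PQ.
have PQE a b : \big[@mp_oplus R/None]_(l < n) mp_otimes (P a l) (Q l b)
    = if a == b then Some 0 else None.
  by have := PQ a b; rewrite !mxE.
have diag a : exists lp : 'I_n * R, P a lp.1 = Some lp.2 /\ Q lp.1 a = Some (- lp.2).
  have := PQE a a; rewrite eqxx => /bigmp_eqP [_ [//|[l]]].
  case Pal: (P a l) => [p|] //; case Qla: (Q l a) => [q|] //= [pq0].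
  by exists (l, p); split=> //=; rewrite Qla; congr Some; lra.
have [sp Hsp] := fin_all_exists diag.
exists (fun a => (sp a).1), (fun a => (sp a).2).
split=> [a|a|a b l ab]; [exact: (Hsp a).1 | exact: (Hsp a).2 |].
have := PQE a b; rewrite (negbTE ab) => /bigmp_eqP [ub _].
by have := ub l; case: (mp_otimes _ _).
Qed.

Lemma pseudo_diagonalizable_potential (A : 'M[R]_n) : pseudo_diagonalizable A ->
  exists c : 'I_n -> R, forall a b, a != b -> A a b = c a - c b.
Proof.
case=> D [Dpd [P [Q [_ [/mp_mulmx_id_monomial [s [p [Ps Qs PQ0]]]] /matrixP DE]]]].
exists p => a b ab.
have Pcol m : m != b -> P m (s b) = None.
  by move=> mb; have := PQ0 _ _ (s b) mb; rewrite Qs; case: (P m (s b)).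
have Qrow l : l != a -> Q (s a) l = None.
  by rewrite eq_sym => al; have := PQ0 _ _ (s a) al; rewrite Ps; case: (Q (s a) l).
have sab : s a != s b.
  by apply/eqP => sasb; have := PQ0 _ _ (s a) ab; rewrite Ps sasb Qs.
have := DE (s a) (s b); rewrite !mxE Dpd //.
rewrite (bigmp_only (j0 := b)) => [|m mb]; last by rewrite Pcol ?mp_otimesr_eps.
rewrite mxE (bigmp_only (j0 := a)) => [|l la]; last by rewrite Qrow.
by rewrite Qs Ps mxE /= => -[]; lra.
Qed.

End Similarity.

Lemma sum_zip_rot1_sub (V : zmodType) (T : eqType) (c : T -> V) (s : seq T) :
  \sum_(p <- zip s (rot 1 s)) (c p.1 - c p.2) = 0.
Proof.
rewrite sumrB -(big_map fst xpredT c) -(big_map snd xpredT c).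
rewrite -/(unzip1 _) -/(unzip2 _) unzip1_zip ?unzip2_zip ?size_rot //.
by rewrite (@perm_big _ _ _ _ (rot 1 s) s) ?subrr // perm_rot.
Qed.

Lemma foldr_max_le (R : realDomainType) (a v : R) (s : seq R) :
  a <= v -> (forall y, y \in s -> y <= v) -> foldr Num.max a s <= v.
Proof.
elim: s => //= y s IH av sv; rewrite ge_max sv ?mem_head // IH // => z zs.
by apply: sv; rewrite in_cons zs orbT.
Qed.

Lemma le_foldr_max (R : realDomainType) (a y : R) (s : seq R) :
  y \in s -> y <= foldr Num.max a s.
Proof.
elim: s => //= z s IH; rewrite in_cons le_max => /predU1P [->|/IH ->];
  by rewrite ?lexx ?orbT.
Qed.

Section CycleMeans.
Variables (R : realType) (n : nat) (A : 'M[R]_n).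

Lemma cycle_meansP y :
  y \in cycle_means A -> exists2 s : seq 'I_n, (0 < size s)%N & y = cycle_mean A s.
Proof.
case/flatten_mapP=> m; rewrite mem_iota => /andP [m0 _] /mapP [t _ ->].
by exists (tval t); rewrite ?size_tuple.
Qed.

Lemma mem_cycle_means_seq1 k : cycle_mean A [:: k] \in cycle_means A.
Proof.
apply/flatten_mapP; exists 1%N.
  by rewrite mem_iota /= add1n ltnS (leq_ltn_trans (leq0n k) (ltn_ord k)).
by apply/mapP; exists [tuple k]; rewrite // mem_filter /= mem_enum.
Qed.

Lemma cycle_mean_seq1 k : cycle_mean A [:: k] = A k k.
Proof. by rewrite /cycle_mean /= big_seq1 divr1. Qed.

Lemma mp_lambda_eq v :
  v \in cycle_means A -> (forall y, y \in cycle_means A -> y <= v) -> mp_lambda A = v.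
Proof.
move=> vA ub; apply/le_anti; rewrite le_foldr_max // andbT.
apply: foldr_max_le => //; case: (cycle_means A) vA ub => //= y s _ ub.
by apply: ub; rewrite mem_head.
Qed.

Lemma cycle_mean_potential_le (c : 'I_n -> R) (d : R) (s : seq 'I_n) :
  (forall a b, a != b -> A a b = c a - c b) -> 0 <= d -> (forall i, A i i <= d) ->
  (0 < size s)%N -> cycle_mean A s <= d.
Proof.
move=> Apot d0 Ad s0; rewrite /cycle_mean ler_pdivrMr ?ltr0n //.
have le_edge (p : 'I_n * 'I_n) : A p.1 p.2 <= c p.1 - c p.2 + d.
  have [->|ne] := eqVneq p.1 p.2; first by rewrite subrr add0r.
  by rewrite Apot // lerDl.
apply: le_trans (ler_sum _ (fun p _ => le_edge p)) _.
rewrite big_split /= sum_zip_rot1_sub add0r big_const_seq count_predT.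
by rewrite iter_addr_0 size_zip size_rot minnn mulr_natr.
Qed.

End CycleMeans.

Section Eigenvectors.
Variables (R : realType) (n : nat) (A : 'M[R]_n) (l : R).

Definition mp_eigen (x : 'I_n -> option R) : Prop :=
  mp_mulmv (mp_of A) x = mp_scale (Some l) x.

Lemma mp_eigen_ub x : mp_eigen x ->
  forall i j, mp_le (mp_otimes (Some (A i j)) (x j)) (mp_otimes (Some l) (x i)).
Proof.
move=> Ax i j; move/(congr1 (fun f => f i)): Ax.
by rewrite /mp_mulmv /mp_scale => /bigmp_eqP [/(_ j)]; rewrite mxE.
Qed.

Lemma mp_eigen_eps_or_real x : mp_eigen x ->
  x = (fun=> None) \/ exists u : 'I_n -> R, x = (fun i => Some (u i)).
Proof.
move=> /mp_eigen_ub ub.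
have [/existsP [i /eqP xi]|] := boolP [exists i, x i == None].
  left; apply: functional_extensionality => j.
  by have := ub i j; rewrite xi mp_otimesr_eps; case: (x j).
rewrite negb_exists => /forallP real; right.
have xS i : exists y, x i = Some y.
  by have := real i; case: (x i) => [y|] // _; exists y.
have [u xu] := fin_all_exists xS.
by exists u; apply: functional_extensionality.
Qed.

Lemma mp_eigen_realP (u : 'I_n -> R) :
  mp_eigen (fun i => Some (u i)) <->
  (forall i j, A i j + u j <= l + u i) /\ (forall i, exists j, A i j + u j = l + u i).
Proof.
rewrite /mp_eigen /mp_mulmv /mp_scale /=; split=> [Au|[ub att]].
  split=> [i j|i].
    by move/(congr1 (fun f => f i))/bigmp_eqP: Au => [/(_ j)]; rewrite mxE.
  move/(congr1 (fun f => f i))/bigmp_eqP: Au => [_ [//|[j]]].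
  by rewrite mxE => -[]; exists j.
apply: functional_extensionality => i; apply/bigmp_eqP; split=> [j|].
  by rewrite mxE; exact: ub.
by right; have [j Aj] := att i; exists j; rewrite mxE /= Aj.
Qed.

Lemma mp_eigen_eps : mp_eigen (fun=> None).
Proof.
rewrite /mp_eigen /mp_scale; apply: functional_extensionality => i.
by apply/bigmp_eqP; split=> [j|]; [rewrite mp_otimesr_eps | left].
Qed.

End Eigenvectors.

Section DominantDiagonalEntry.
Variables (R : realType) (n : nat) (A : 'M[R]_n) (c : 'I_n -> R) (k : 'I_n).
Hypothesis A_potential : forall a b, a != b -> A a b = c a - c b.
Hypothesis Akk_ge0 : 0 <= A k k.
Hypothesis Aii_le0 : forall i, i != k -> A i i <= 0.

Lemma diag_le_Akk i : A i i <= A k k.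
Proof. by have [->|ik] := eqVneq i k; last exact: le_trans (Aii_le0 ik) _. Qed.

Lemma mp_lambda_dominant_diag : mp_lambda A = A k k.
Proof.
apply: mp_lambda_eq; first by rewrite -(cycle_mean_seq1 A k) mem_cycle_means_seq1.
move=> y /cycle_meansP [s s0 ->].
exact: cycle_mean_potential_le A_potential Akk_ge0 diag_le_Akk s0.
Qed.

Lemma column_dominant i j : A i j + A j k <= A k k + A i k.
Proof.
have [->|ij] := eqVneq i j; first by rewrite lerD2r diag_le_Akk.
have [->|jk] := eqVneq j k; first by rewrite addrC.
rewrite (A_potential ij) (A_potential jk) addrA subrK.
have [->|ik] := eqVneq i k; last by rewrite (A_potential ik) lerDr.
by rewrite subrr; exact: addr_ge0 Akk_ge0 Akk_ge0.
Qed.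

Lemma mp_eigen_column (a : R) :
  mp_eigen A (A k k) (fun i => Some (a + A i k)).
Proof.
apply/mp_eigen_realP; split=> [i j|i]; last by exists k; lra.
by rewrite addrCA [A k k + _]addrCA lerD2l column_dominant.
Qed.

Lemma mp_eigen_real_colE (u : 'I_n -> R) :
  mp_eigen A (A k k) (fun i => Some (u i)) -> forall i, u i = u k - A k k + A i k.
Proof.
case/mp_eigen_realP=> ub att i.
have [->|ik] := eqVneq i k; first by rewrite subrK.
have Aik : A i k = c i - c k := A_potential ik.
suff : u i - c i <= u k - c k - A k k by have := ub i k; rewrite Aik; lra.
move: Akk_ge0; rewrite le_eqVlt => /predU1P [Akk0|Akk_gt0].
  have Aki : A k i = c k - c i by rewrite A_potential // eq_sym.
  by have := ub k i; rewrite Aki -Akk0; lra.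
have climb j : j != k -> exists2 l, l != j & u l - c l = A k k + (u j - c j).
  (* a_jj < a_kk, so row j attains its maximum off the diagonal *)
  move=> jk; have [l Ajl] := att j; have [lj|lj] := eqVneq l j.
    by have := Aii_le0 jk; move: Ajl; rewrite lj; lra.
  exists l => //; have : A j l = c j - c l by rewrite A_potential // eq_sym.
  by lra.
have [m _ m_max] := @arg_maxP _ _ _ k xpredT (fun j => u j - c j) isT.
have mk : m = k.
  apply/eqP/negPn/negP => mk; have [l _ ul] := climb m mk.
  by have : u l - c l <= u m - c m := m_max l isT; lra.
have [l _ ul] := climb i ik.
have : u l - c l <= u k - c k by rewrite -mk; exact: m_max.
lra.
Qed.

End DominantDiagonalEntry.

Theorem corollary4p20 (R : realType) (n : nat) (A : 'M[R]_n) (k : 'I_n) :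
  (2 <= n)%N ->
  pseudo_diagonalizable A ->
  0 <= A k k ->
  (forall i : 'I_n, i != k -> A i i <= 0) ->
  mp_lambda A = A k k /\
  (forall x : 'I_n -> option R,
     mp_in_eigenspace A x <->
     exists alpha : option R, x = mp_scale alpha (fun i => Some (A i k))).
Proof.
move=> _ /pseudo_diagonalizable_potential [c Apot] Akk_ge0 Aii_le0.
have lambdaE := mp_lambda_dominant_diag Apot Akk_ge0 Aii_le0.
split=> // x; rewrite /mp_in_eigenspace lambdaE; split=> [eig|].
  have [xE|[u xE]] := mp_eigen_eps_or_real eig; subst x; first by exists None.
  exists (Some (u k - A k k)); apply: functional_extensionality => i.
  by rewrite /mp_scale /= -(mp_eigen_real_colE Apot Akk_ge0 Aii_le0 eig).
case=> [[a|] ->]; first exact: (mp_eigen_column Apot Akk_ge0 Aii_le0 a).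
exact: mp_eigen_eps.
Qed.
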